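(* Let $M,N\in\mathbb N$ with $M>N$, let $\mathcal B\subseteq\mathcal D^N$, and let $f\in L_q[0,1]$ with $\int f=0$. On $\{-1,1\}^{\mathcal B}$ with the uniform probability, define $Y(\theta)=\langle f,\sum_{K\in\mathcal B}\theta_Kh^M_K\rangle$. Then $\mathbb E(Y)=0$ and $\mathrm{Var}(Y)\le\|f\|_q^2\,|\bigcup\mathcal B|^{1/p}\,2^{-N/p}$, where $|\bigcup\mathcal B|$ is the Lebesgue measure of the union of the intervals in $\mathcal B$.
   Context: Fix $1<p<\infty$, $q=p/(p-1)$. $\langle g,f\rangle=\int_0^1 gf$. A dyadic interval is $[(i-1)2^{-n},i2^{-n})$ with $n\ge0$, $1\le i\le2^n$; $\mathcal D^n$ denotes those of length $2^{-n}$ and $\mathcal D_n=\bigcup_{k=0}^n\mathcal D^k$. For a dyadic interval $I$, $I^+$, $I^-$ are its left and right halves and $h_I=\chi_{I^+}-\chi_{I^-}$. For each $n\in\mathbb N$ a family $(h^n_I)_{I\in\mathcal D_{n-1}}$ in $L_p[0,1]$ is fixed, having the same joint distribution as $(h_I)_{I\in\mathcal D_{n-1}}$, such that the $\sigma$-algebras $\sigma(h^n_I:I\in\mathcal D_{n-1})$, $n\in\mathbb N$, are independent. *)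

From HB Require Import structures.
From mathcomp Require Import all_boot all_order all_algebra.
From mathcomp Require Import all_classical all_reals all_analysis.
Set Implicit Arguments. Unset Strict Implicit. Unset Printing Implicit Defensive.
Import Order.TTheory GRing.Theory Num.Theory.
Local Open Scope classical_set_scope.
Local Open Scope ring_scope.

(* Dyadic interval I_{n,i} = [i 2^-n, (i+1) 2^-n), 0-based i (0 <= i < 2^n).
   This is the paper's [(i'-1)2^-n, i'2^-n) with i' = i+1. *)
Definition dyadic {R : realType} (n i : nat) : set R :=
  `[(i%:R / 2 ^+ n), (i.+1%:R / 2 ^+ n)[.

(* Haar function h_I = chi_{I^+} - chi_{I^-} for I = I_{n,i}:
   I^+ = I_{n+1,2i} (left half), I^- = I_{n+1,2i+1} (right half). *)
Definition haar {R : realType} (n i : nat) (x : R) : R :=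
  \1_(dyadic n.+1 i.*2) x - \1_(dyadic n.+1 i.*2.+1) x.

Definition unitI {R : realType} : set R := `[0%R, 1%R].

(* index set D_{n-1} = {(k,i) : k <= n-1, i < 2^k}, for n >= 1 *)
Definition Dupto (n : nat) : set (nat * nat) :=
  [set j | (j.1 < n)%N /\ (j.2 < 2 ^ j.1)%N].

(* Equality of joint distributions of the finite families
   (g_j)_{j in D_{n-1}} and (haar_j)_{j in D_{n-1}} on ([0,1], Lebesgue):
   their joint laws agree on all measurable rectangles (which determine the
   law on the product Borel sigma-algebra). *)
Definition same_joint_law {R : realType} (n : nat) (g : nat -> nat -> R -> R) :=
  forall A : nat -> nat -> set R, (forall k i, measurable (A k i)) ->
    (@lebesgue_measure R) (unitI `&` \bigcap_(j in Dupto n) (g j.1 j.2 @^-1` A j.1 j.2))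
    = (@lebesgue_measure R) (unitI `&` \bigcap_(j in Dupto n) (haar j.1 j.2 @^-1` A j.1 j.2)).

Definition gen_events {R : realType} (h : nat -> nat -> nat -> R -> R) (n : nat)
  : set (set R) :=
  [set E | exists k i (A : set R), [/\ (k < n)%N, (i < 2 ^ k)%N, measurable A &
          E = unitI `&` (h n k i @^-1` A)]].

(* Mutual independence of the sigma-algebras sigma(h^n_I : I in D_{n-1}), n >= 1. *)
Definition indep_levels {R : realType} (h : nat -> nat -> nat -> R -> R) :=
  forall (S : seq nat) (E : nat -> set R), uniq S -> all (fun n => 0 < n)%N S ->
    (forall n, n \in S -> <<s unitI, gen_events h n>> (E n)) ->
    (@lebesgue_measure R) (unitI `&` \bigcap_(n in [set n | n \in S]) E n)
    = (\prod_(n <- S) (@lebesgue_measure R) (E n))%E.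

(* g is in L_r[0,1] (a representative: measurable on [0,1], finite r-th moment) *)
Definition inL {R : realType} (r : R) (g : R -> R) :=
  measurable_fun unitI g /\
  (\int[@lebesgue_measure R]_(x in unitI) ((`|g x| `^ r)%:E) < +oo)%E.

Definition Lnorm01 {R : realType} (r : R) (g : R -> R) : R :=
  (Rintegral (@lebesgue_measure R) unitI (fun x => `|g x| `^ r)) `^ r^-1.

Definition uexp {R : realType} {T : finType} (X : T -> R) : R :=
  (#|T|%:R)^-1 * \sum_(t : T) X t.
Definition uvar {R : realType} {T : finType} (X : T -> R) : R :=
  uexp (fun t => (X t - uexp X) ^+ 2).

Definition sgnb {R : realType} (b : bool) : R := if b then 1 else -1.

From HB Require Import structures.
From mathcomp Require Import all_boot all_order all_algebra.
From mathcomp Require Import all_classical all_reals all_analysis.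
From mathcomp Require Import ring lra measurable_realfun.
Import Order.TTheory GRing.Theory Num.Theory.
Set Implicit Arguments. Unset Strict Implicit.
Local Open Scope classical_set_scope.
Local Open Scope ring_scope.

(** The random variable [Y] is a Rademacher sum [Y(theta) = sum_K theta_K c_K] with
   [c_K = <f, h^M_K>], so [E Y = 0] and [Var Y = sum_K c_K^2].  Because the
   family [(h^M_K)_K] has the joint law of the Haar family [(h_K)_K], its members
   indexed by [D^N] are a.e. bounded by 1 and have a.e. disjoint supports of
   measure at most [2^-N].  Hence for coefficients [|a_K| <= 1] vanishing off [S],
   [|sum_K a_K h^M_K|] is a.e. below the indicator of a set of measure at most
   [|S| 2^-N], and Hoelder's inequality bounds [|<f, sum_K a_K h^M_K>|] by
   [||f||_q (|S| 2^-N)^(1/p)].  With [a = delta_K] this bounds each [|c_K|], with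
   [a_K = sg c_K] it bounds [sum_K |c_K|], and [sum_K c_K^2 <= max_K |c_K| sum_K |c_K|]. *)

Lemma bigcup_finset (T : Type) (I : finType) (S : {set I}) (F : I -> set T) :
  \bigcup_(K in [set K | K \in S]) F K = \big[setU/set0]_(K in S) F K.
Proof.
rewrite -bigcup_seq_cond; congr (\bigcup_(K in mkset _) _).
by apply/funext => K; rewrite mem_index_enum.
Qed.

Lemma measurable_unitI (R : realType) : measurable (@unitI R).
Proof. exact: measurable_itv. Qed.
(* [measurable] unfolds to a product whose binder would otherwise become implicit. *)
Arguments measurable_unitI {R}.

Lemma lebesgue_measure_unitI (R : realType) : @lebesgue_measure R unitI = 1%E.
Proof. by rewrite /unitI lebesgue_measure_itv /= lte01 /= oppr0 adde0. Qed.

Section dyadic_intervals.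
Variable R : realType.
Local Notation mu := (@lebesgue_measure R).
Implicit Types (n i j : nat) (x : R).

Lemma dyadicP n i x :
  dyadic n i x <-> i%:R <= x * 2 ^+ n /\ x * 2 ^+ n < i.+1%:R.
Proof.
have h2 : (0 : R) < 2 ^+ n by rewrite exprn_gt0.
rewrite /dyadic /= in_itv /= ler_pdivrMr // ltr_pdivlMr //.
by split => [/andP[]|[-> ->]].
Qed.

Lemma dyadic_inj n i j x : dyadic n i x -> dyadic n j x -> i = j.
Proof.
move=> /dyadicP[ix xi] /dyadicP[jx xj].
have : (i%:R : R) < j.+1%:R by apply: le_lt_trans xj.
have : (j%:R : R) < i.+1%:R by apply: le_lt_trans xi.
by rewrite !ltr_nat !ltnS => ji ij; apply/eqP; rewrite eqn_leq ij ji.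
Qed.

Lemma dyadic_children n i x :
  dyadic n.+1 i.*2 x \/ dyadic n.+1 i.*2.+1 x -> dyadic n i x.
Proof.
rewrite !dyadicP exprS mulrA (mulrC x 2) -mulrA.
have e k : (k.*2%:R : R) = 2 * k%:R by rewrite -muln2 natrM mulrC.
have e1 k m : ((k + m)%N%:R : R) = k%:R + m%:R by rewrite natrD.
rewrite -(addn2 i.*2) -(addn1 i.*2) -(addn1 i) !e1 e.
by move: (x * 2 ^+ n) (i%:R : R) => y z [[]|[]] ? ?; split; lra.
Qed.

Lemma normr_haar_le1 n i x : `|haar n i x| <= 1.
Proof.
rewrite /haar !indicE.
by case: (x \in _); case: (x \in _); rewrite ?subrr ?subr0 ?sub0r ?normrN ?normr0 ?normr1.
Qed.

Lemma haar_neq0_dyadic n i x : haar n i x != 0 -> dyadic n i x.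
Proof.
rewrite /haar !indicE => hx; apply: dyadic_children.
move: hx; have [/set_mem ?|_] := boolP (x \in _); first by left.
have [/set_mem ?|_] := boolP (x \in _); first by right.
by rewrite subrr eqxx.
Qed.

Lemma measurable_haar n i : measurable_fun setT (@haar R n i).
Proof. by apply: measurable_funB; apply: measurable_indic; exact: measurable_itv. Qed.

Lemma lebesgue_measure_dyadic n i : mu (dyadic n i) = ((2 ^+ n)^-1)%:E.
Proof.
have h2 : (0 : R) < 2 ^+ n by rewrite exprn_gt0.
rewrite /dyadic lebesgue_measure_itv /= lte_fin ltr_pM2r ?invr_gt0 // ltr_nat ltnSn.
by rewrite -EFinD -mulrBl -natrB // subSnn mul1r.
Qed.

Lemma lebesgue_measure_bigcup_dyadic n (B : {set 'I_(2 ^ n)}) :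
  mu (\bigcup_(K in [set K | K \in B]) dyadic n K) = (#|B|%:R / 2 ^+ n)%:E.
Proof.
rewrite bigcup_finset measure_bigsetU_ord_cond.
- rewrite (eq_bigr (fun=> ((2 ^+ n)^-1)%:E)) => [|K _]; last exact: lebesgue_measure_dyadic.
  by rewrite sumEFin sumr_const mulr_natl.
- by move=> K _; exact: measurable_itv.
- by move=> K L _ _ [x [xK xL]]; apply: val_inj; exact: dyadic_inj xK xL.
Qed.

End dyadic_intervals.

Section copies_of_haar.
Variables (R : realType) (M N : nat) (g : nat -> nat -> R -> R).
Hypotheses (hg : same_joint_law M g) (NM : (N < M)%N).
Local Notation mu := (@lebesgue_measure R).

Lemma same_joint_law_pair K L (S1 S2 : set R) :
  (K < 2 ^ N)%N -> (L < 2 ^ N)%N -> measurable S1 -> measurable S2 ->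
  mu (unitI `&` (g N K @^-1` S1 `&` g N L @^-1` S2))
  = mu (unitI `&` (haar N K @^-1` S1 `&` haar N L @^-1` S2)).
Proof.
move=> KN LN mS1 mS2.
pose A k i := (if (k == N) && (i == K) then S1 else setT) `&`
              (if (k == N) && (i == L) then S2 else setT).
have bigcapA (u : nat -> nat -> R -> R) :
    \bigcap_(j in Dupto M) (u j.1 j.2 @^-1` A j.1 j.2)
    = u N K @^-1` S1 `&` u N L @^-1` S2.
  apply/seteqP; split => x /=.
    move=> Ax; have := Ax (N, K) (conj NM KN); have := Ax (N, L) (conj NM LN).
    by rewrite /A /= !eqxx => -[_ ?] [? _].
  move=> [? ?] [k i] _ /=; rewrite /A.
  by split; case: ifP => // /andP[/eqP -> /eqP ->].
by rewrite -!bigcapA; apply: hg => k i; apply: measurableI; case: ifP.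
Qed.

Variable K : nat.
Hypotheses (KN : (K < 2 ^ N)%N) (mgK : measurable_fun unitI (g N K)).

Let same_joint_law_single (S : set R) : measurable S ->
  mu (unitI `&` g N K @^-1` S) = mu (unitI `&` haar N K @^-1` S).
Proof.
move=> mS; have := same_joint_law_pair KN KN mS (@measurableT _ R).
by rewrite !preimage_setT !setIT.
Qed.

Lemma copy_haar_bounded : {ae mu, forall x, unitI x -> `|g N K x| <= 1}.
Proof.
have mS : measurable (~` `[-1, 1] : set R) by exact: measurableC.
exists (unitI `&` g N K @^-1` ~` `[-1, 1]); split.
- exact: mgK measurable_unitI _ mS.
- rewrite (same_joint_law_single mS) (_ : _ `&` _ = set0) ?measure0 //.
  apply/seteqP; split => x //=; by rewrite in_itv /= -ler_norml normr_haar_le1 => -[].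
- move=> x /= /not_implyP[xI gx]; split => //=.
  by rewrite in_itv /= => ?; apply: gx; rewrite ler_norml.
Qed.

Lemma copy_haar_disjoint L :
  (L < 2 ^ N)%N -> measurable_fun unitI (g N L) -> K != L ->
  {ae mu, forall x, unitI x -> g N K x = 0 \/ g N L x = 0}.
Proof.
move=> LN mgL KL; have m0 : measurable ([set~ 0] : set R) by exact: measurableC.
exists (unitI `&` (g N K @^-1` [set~ 0] `&` g N L @^-1` [set~ 0])); split.
- rewrite -[X in X `&` _]setIid setIACA; apply: measurableI.
    exact: mgK measurable_unitI _ m0.
  exact: mgL measurable_unitI _ m0.
- rewrite same_joint_law_pair // (_ : _ `&` _ = set0) ?measure0 //.
  apply/seteqP; split => x //= [_ [/eqP hK /eqP hL]].
  by move/eqP: KL; apply; exact: dyadic_inj (haar_neq0_dyadic hK) (haar_neq0_dyadic hL).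
- by move=> x /= /not_implyP[xI /not_orP[]].
Qed.

Lemma copy_haar_support :
  (mu (unitI `&` g N K @^-1` [set~ 0%R]) <= ((2 ^+ N)^-1)%:E)%E.
Proof.
have m0 : measurable ([set~ 0] : set R) by exact: measurableC.
rewrite (same_joint_law_single m0) -(@lebesgue_measure_dyadic R N K).
apply: le_measure; rewrite ?inE.
- apply: measurableI; first exact: measurable_itv.
  by rewrite -[X in measurable X]setTI; exact: measurable_haar.
- exact: measurable_itv.
- by move=> x [_ /eqP /haar_neq0_dyadic].
Qed.

End copies_of_haar.

Lemma Lnorm_indic (d : measure_display) (T : measurableType d) (R : realType)
    (mu : {measure set T -> \bar R}) (p : R) (E : set T) :
  0 < p -> measurable E -> mu E \is a fin_num ->
  Lnorm mu p%:E (EFin \o \1_E) = (fine (mu E) `^ p^-1)%:E.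
Proof.
move=> p0 mE finE; rewrite unlock -poweR_EFin fineK //; congr (_ `^ _)%E.
rewrite -[in RHS](setIT E) -integral_indic //; apply: eq_integral => x _ /=.
by rewrite indicE; case: (x \in E); rewrite ?normr1 ?powR1 // normr0 powR0 // gt_eqF.
Qed.

Section hoelder_on_unit_interval.
Variables (R : realType) (p q : R).
Hypotheses (hp : 1 < p) (hq : q = p / (p - 1)).
Local Notation mu := (@lebesgue_measure R).

Let p_gt0 : 0 < p. Proof. exact: lt_trans ltr01 hp. Qed.
Let q_gt0 : 0 < q. Proof. by rewrite hq divr_gt0 // subr_gt0. Qed.
Let conjugate_exponents : q^-1 + p^-1 = 1.
Proof. by rewrite hq invf_div; field; rewrite gt_eqF. Qed.

Variable f : R -> R.
Hypothesis hf : inL q f.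

Let fI x := if x \in unitI then f x else 0.

Let measurable_fI : measurable_fun setT fI.
Proof.
have := (measurable_restrictT f measurable_unitI).1 hf.1.
by congr measurable_fun; apply/funext => x; rewrite /patch /fI; case: ifP.
Qed.

Let Lnorm_fI : Lnorm mu q%:E (EFin \o fI) = (Lnorm01 q f)%:E.
Proof.
rewrite unlock /Lnorm01 /Rintegral.
have -> : (\int[mu]_x (`|(EFin \o fI) x| `^ q) =
           \int[mu]_(x in unitI) (`|f x| `^ q)%:E)%E.
  rewrite [RHS]integral_mkcond; apply: eq_integral => x _ /=.
  by rewrite /patch /fI; case: ifP => //= _; rewrite normr0 powR0 // gt_eqF.
have fin : (\int[mu]_(x in unitI) (`|f x| `^ q)%:E)%E \is a fin_num.
  by rewrite ge0_fin_numE ?hf.2 //; apply: integral_ge0 => x _; rewrite lee_fin powR_ge0.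
by rewrite -[in LHS](fineK fin) poweR_EFin.
Qed.

Lemma hoelder_unitI_indic (g : R -> R) (E : set R) :
  measurable_fun unitI g -> measurable E -> E `<=` unitI ->
  {ae mu, forall x, unitI x -> `|g x| <= \1_E x} ->
  (\int[mu]_(x in unitI) `|f x * g x|%:E
     <= (Lnorm01 q f * fine (mu E) `^ p^-1)%:E)%E.
Proof.
move=> mg mE EI gE.
have mf := hf.1.
apply: (@le_trans _ _ (\int[mu]_(x in unitI) (`|f x| * \1_E x)%:E)%E).
  apply: ae_ge0_le_integral => //.
  - exact: measurable_unitI.
  - by apply/measurable_EFinP; apply: measurableT_comp => //; exact: measurable_funM.
  - apply/measurable_EFinP; apply: measurable_funM; last exact: measurable_indic.
    exact: measurableT_comp.
  - case: gE => A [mA A0 gEA]; exists A; split => // x /= nx.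
    apply: gEA => /= gEx; apply: nx => Ix.
    by rewrite lee_fin normrM ler_wpM2l // gEx.
have -> : (\int[mu]_(x in unitI) (`|f x| * \1_E x)%:E
           = Lnorm mu 1%E (EFin \o (fI \* \1_E)%R))%E.
  rewrite Lnorm1 [LHS]integral_mkcond; apply: eq_integral => x _ /=.
  rewrite /patch /fI; case: ifP => _ /=; last by rewrite mul0r normr0.
  by rewrite normrM [`|\1_E x|]ger0_norm // indicE.
have mE1 : measurable_fun setT (\1_E : R -> R) by exact: measurable_indic.
apply: le_trans (hoelder mu measurable_fI mE1 q_gt0 p_gt0 conjugate_exponents) _.
have finE : mu E \is a fin_num.
  rewrite ge0_fin_numE //; apply: (@le_lt_trans _ _ (mu unitI)).
    by apply: le_measure; rewrite ?inE //; exact: measurable_unitI.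
  by rewrite lebesgue_measure_unitI ltry.
by rewrite Lnorm_fI Lnorm_indic // -EFinM.
Qed.

End hoelder_on_unit_interval.

Lemma Rintegral_sum (d : measure_display) (T : measurableType d) (R : realType)
    (mu : {measure set T -> \bar R}) (D : set T) (I : Type) (s : seq I)
    (phi : I -> T -> R) :
  measurable D -> (forall i, mu.-integrable D (EFin \o phi i)) ->
  Rintegral mu D (fun x => \sum_(i <- s) phi i x) = \sum_(i <- s) Rintegral mu D (phi i).
Proof.
move=> mD iphi; rewrite /Rintegral sum_fine.
  by rewrite -integral_sum //; congr fine; apply: eq_integral => x _; rewrite sumEFin.
by move=> i _; exact: (integrable_fin_num mD (iphi i)).
Qed.

Lemma le_measure_bigsetU (d : measure_display) (T : measurableType d) (R : realType)
    (mu : {measure set T -> \bar R}) (I : Type) (s : seq I) (P : pred I)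
    (F : I -> set T) :
  (forall i, measurable (F i)) ->
  (mu (\big[setU/set0]_(i <- s | P i) F i) <= \sum_(i <- s | P i) mu (F i))%E.
Proof.
move=> mF; elim: s => [|i s IHs]; first by rewrite !big_nil measure0.
rewrite !big_cons; case: ifP => _ //.
apply: le_trans (measureU2 mu (mF i) (bigsetU_measurable _ (fun j _ => mF j))) _.
exact: leeD2l.
Qed.

Lemma normr_sum_disjoint_le (R : numDomainType) (I : finType) (S : {set I})
    (a y : I -> R) :
  (forall K, `|a K| <= 1) -> (forall K, a K != 0 -> K \in S) ->
  (forall K, `|y K| <= 1) -> (forall K L, K != L -> y K = 0 \/ y L = 0) ->
  `|\sum_K a K * y K| <= [exists K in S, y K != 0]%:R.
Proof.
move=> a1 aS y1 ydisj; have [[K /andP[KS yK]]|noK] := altP existsP.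
  rewrite (bigD1 K) //= big1 => [|L LK]; last first.
    by have [->|yL] := ydisj L K LK; [rewrite mulr0 | move/eqP: yK].
  by rewrite addr0 normrM -[1]mulr1 ler_pM.
rewrite big1 ?normr0 // => K _; have [->|aK] := eqVneq (a K) 0; first by rewrite mul0r.
suff -> : y K = 0 by rewrite mulr0.
by apply/eqP; apply: contraNT noK => yK; apply/existsP; exists K; rewrite aS.
Qed.

Section disjointly_supported_family.
Variables (R : realType) (p q : R).
Hypotheses (hp : 1 < p) (hq : q = p / (p - 1)).
Local Notation mu := (@lebesgue_measure R).
Variables (f : R -> R) (I : finType) (G : I -> R -> R) (c : R).
Hypotheses (hf : inL q f) (mG : forall K, measurable_fun unitI (G K)).
Hypothesis G_bounded : forall K, {ae mu, forall x, unitI x -> `|G K x| <= 1}.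
Hypothesis G_disjoint : forall K L, K != L ->
  {ae mu, forall x, unitI x -> G K x = 0 \/ G L x = 0}.
Hypothesis G_support : forall K, (mu (unitI `&` G K @^-1` [set~ 0%R]) <= c%:E)%E.

Let support (S : {set I}) :=
  \bigcup_(K in [set K | K \in S]) (unitI `&` G K @^-1` [set~ 0%R]).

Let measurable_support S : measurable (support S).
Proof.
rewrite /support bigcup_finset; apply: bigsetU_measurable => K _.
exact: mG measurable_unitI _ (measurableC (measurable_set1 _)).
Qed.

Let measure_support S : (mu (support S) <= (#|S|%:R * c)%:E)%E.
Proof.
have mF K : measurable (unitI `&` G K @^-1` [set~ 0%R]).
  exact: mG measurable_unitI _ (measurableC (measurable_set1 _)).
rewrite /support bigcup_finset; apply: le_trans (le_measure_bigsetU mu _ _ mF) _.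
rewrite mulr_natl -(sumr_const (mem S)) -sumEFin; apply: lee_sum => K _; exact: G_support.
Qed.

Section bounded_combination.
Variables (a : I -> R) (S : {set I}).
Hypotheses (a_bounded : forall K, `|a K| <= 1) (a_support : forall K, a K != 0 -> K \in S).

Let ae_normr_sum_le : {ae mu, forall x, unitI x ->
  `|\sum_K a K * G K x| <= \1_(support S) x}.
Proof.
(* The Filter instance of the a.e. filter of [mu] is not inferred automatically. *)
have FF := ae_filter_ringOfSetsType mu.
have bounded : {ae mu, forall x, forall K, unitI x -> `|G K x| <= 1}.
  exact: filter_forall.
have disjoint : {ae mu, forall x, forall KL : I * I, unitI x -> KL.1 != KL.2 ->
    G KL.1 x = 0 \/ G KL.2 x = 0}.
  apply: filter_forall => -[K L]; have [<-|KL] := eqVneq K L.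
    by apply: aeW => x _ /=; rewrite ?eqxx.
  by apply: filterS (G_disjoint KL) => x GKL Ix _; exact: GKL.
apply: filterS2 bounded disjoint => x Gx1 Gxdisj Ix.
have := normr_sum_disjoint_le a_bounded a_support (Gx1^~ Ix) (fun K L => Gxdisj (K, L) Ix).
move/le_trans; apply; rewrite indicE.
case: existsP => [[K /andP[KS /eqP GK]]|_]; last by rewrite ler0n.
by rewrite mem_set //; exists K.
Qed.

Lemma integral_normr_mul_sum_le :
  (\int[mu]_(x in unitI) `|f x * \sum_K a K * G K x|%:E
     <= (Lnorm01 q f * (#|S|%:R * c) `^ p^-1)%:E)%E.
Proof.
have mg : measurable_fun unitI (fun x => \sum_K a K * G K x).
  by apply: measurable_sum => K; apply: measurable_funM => //; exact: measurable_cst.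
apply: le_trans (hoelder_unitI_indic hp hq hf mg (measurable_support S) _ ae_normr_sum_le) _.
  by move=> x [K _ []].
have supp_le : fine (mu (support S)) <= #|S|%:R * c.
  have fin : mu (support S) \is a fin_num.
    by rewrite ge0_fin_numE // (le_lt_trans (measure_support S)) ?ltry.
  by rewrite -lee_fin fineK // measure_support.
have supp_ge0 : 0 <= fine (mu (support S)) by rewrite fine_ge0.
rewrite lee_fin ler_wpM2l ?powR_ge0 // ge0_ler_powR ?nnegrE ?invr_ge0 //.
- exact: ltW (lt_trans ltr01 hp).
- exact: le_trans supp_le.
Qed.

Let measurable_mul_sum : measurable_fun unitI (fun x => f x * \sum_K a K * G K x).
Proof.
apply: measurable_funM; first exact: hf.1.
by apply: measurable_sum => K; apply: measurable_funM => //; exact: measurable_cst.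
Qed.

Lemma integrable_mul_sum :
  mu.-integrable unitI (EFin \o (fun x => f x * \sum_K a K * G K x)).
Proof.
apply/integrableP; split; first exact/measurable_EFinP.
exact: le_lt_trans integral_normr_mul_sum_le (ltry _).
Qed.

Lemma normr_Rintegral_mul_sum_le :
  `|Rintegral mu unitI (fun x => f x * \sum_K a K * G K x)|
    <= Lnorm01 q f * (#|S|%:R * c) `^ p^-1.
Proof.
have := @le_normr_Rintegral _ _ R mu unitI _ measurable_unitI integrable_mul_sum.
move/le_trans; apply.
rewrite -lee_fin /Rintegral fineK; first exact: integral_normr_mul_sum_le.
rewrite ge0_fin_numE; last by apply: integral_ge0 => x _; rewrite lee_fin.
exact: le_lt_trans integral_normr_mul_sum_le (ltry _).
Qed.

End bounded_combination.

Let sum_delta K x : \sum_L (L == K)%:R * G L x = G K x.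
Proof.
rewrite (bigD1 K) //= eqxx mul1r big1 ?addr0 // => L /negbTE ->.
by rewrite mul0r.
Qed.

Let delta_bounded (K L : I) : `|(L == K)%:R| <= 1 :> R.
Proof. by case: eqP; rewrite ?normr1 ?normr0 ?ler01. Qed.

Let delta_support (K L : I) : (L == K)%:R != 0 :> R -> L \in [set K]%SET.
Proof. by rewrite inE; case: (L == K) => //; rewrite eqxx. Qed.

Lemma integrable_mul K : mu.-integrable unitI (EFin \o (fun x => f x * G K x)).
Proof.
have := integrable_mul_sum (delta_bounded K) (delta_support (K := K)).
by apply: eq_integrable => [|x _ /=]; [exact: measurable_unitI | rewrite sum_delta].
Qed.

Lemma normr_Rintegral_mul_le K :
  `|Rintegral mu unitI (fun x => f x * G K x)| <= Lnorm01 q f * c `^ p^-1.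
Proof.
have := normr_Rintegral_mul_sum_le (delta_bounded K) (delta_support (K := K)).
rewrite cards1 mul1r; under eq_Rintegral do rewrite sum_delta; exact.
Qed.

Lemma Rintegral_mul_sum (b : I -> R) :
  Rintegral mu unitI (fun x => f x * \sum_K b K * G K x)
  = \sum_K b K * Rintegral mu unitI (fun x => f x * G K x).
Proof.
have int K : mu.-integrable unitI (EFin \o (fun x => b K * (f x * G K x))).
  have := @integrableZl _ _ _ mu unitI measurable_unitI (b K) _ (integrable_mul K).
  by apply: eq_integrable => [|x _]; first exact: measurable_unitI.
have -> : (fun x => f x * \sum_K b K * G K x) = (fun x => \sum_K b K * (f x * G K x)).
  by apply/funext => x; rewrite mulr_sumr; apply: eq_bigr => K _; rewrite mulrCA.
rewrite (Rintegral_sum _ _ int); last exact: measurable_unitI.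
apply: eq_bigr => K _.
exact: (@RintegralZl _ _ _ mu unitI _ (b K) measurable_unitI (integrable_mul K)).
Qed.

Lemma sum_normr_Rintegral_mul_le :
  \sum_K `|Rintegral mu unitI (fun x => f x * G K x)|
    <= Lnorm01 q f * (#|I|%:R * c) `^ p^-1.
Proof.
pose r K := Rintegral mu unitI (fun x => f x * G K x).
have sg_bounded K : `|Num.sg (r K)| <= 1.
  by rewrite normr_sg; case: (_ != 0); rewrite ?ler01.
have sg_support K : Num.sg (r K) != 0 -> K \in [set: I]%SET by rewrite inE.
have := normr_Rintegral_mul_sum_le sg_bounded sg_support.
rewrite cardsT Rintegral_mul_sum; apply: le_trans.
by under eq_bigr do rewrite normrEsg; exact: ler_norm.
Qed.

End disjointly_supported_family.

Section rademacher_sums.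
Variables (R : realType) (I : finType).
Local Notation signs := {ffun I -> bool}.

Definition flip_at (K : I) (theta : signs) : signs :=
  [ffun L => if L == K then ~~ theta L else theta L].

Lemma flip_atK K : involutive (flip_at K).
Proof.
by move=> theta; apply/ffunP => L; rewrite !ffunE; case: eqP => // _; rewrite negbK.
Qed.

Lemma sgnb_negb b : sgnb (~~ b) = - sgnb b :> R.
Proof. by case: b; rewrite /sgnb ?opprK. Qed.

Lemma sgnb_sqr b : sgnb b * sgnb b = 1 :> R.
Proof. by case: b; rewrite /sgnb ?mulr1 ?mulrNN ?mulr1. Qed.

Lemma sum_sgnb_flip_invariant K (F : signs -> R) :
  (forall theta, F (flip_at K theta) = F theta) ->
  \sum_(theta : signs) sgnb (theta K) * F theta = 0.
Proof.
move=> FK; set s := \sum_(theta : signs) _.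
have : s = - s.
  rewrite {1}/s (reindex_inj (inv_inj (flip_atK K))) -sumrN.
  by apply: eq_bigr => theta _; rewrite FK ffunE eqxx sgnb_negb mulNr.
by move/eqP; rewrite -addr_eq0 -mulr2n mulrn_eq0 => /eqP.
Qed.

Lemma sum_sgnb K : \sum_(theta : signs) sgnb (theta K) = 0 :> R.
Proof.
have := @sum_sgnb_flip_invariant K (fun=> 1).
by under eq_bigr do rewrite mulr1; apply.
Qed.

Lemma sum_sgnb_mul K L :
  \sum_(theta : signs) sgnb (theta K) * sgnb (theta L) = (K == L)%:R * #|signs|%:R :> R.
Proof.
have [<-|KL] := eqVneq K L.
  by under eq_bigr do rewrite sgnb_sqr; rewrite sumr_const mul1r.
rewrite mul0r sum_sgnb_flip_invariant // => theta.
by rewrite ffunE eq_sym (negbTE KL).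
Qed.

Variables (c : I -> R) (Y : signs -> R).
Hypothesis Y_rademacher : forall theta, Y theta = \sum_K sgnb (theta K) * c K.

Lemma uexp_rademacher : uexp Y = 0.
Proof.
rewrite /uexp (eq_bigr _ (fun theta _ => Y_rademacher theta)) exchange_big big1 ?mulr0 //.
by move=> K _; rewrite -mulr_suml sum_sgnb mul0r.
Qed.

Lemma uvar_rademacher : uvar Y = \sum_K c K ^+ 2.
Proof.
have cardT : #|signs|%:R != 0 :> R.
  by rewrite pnatr_eq0 card_ffun card_bool -lt0n expn_gt0.
rewrite /uvar uexp_rademacher /uexp -[RHS](mulKf cardT); congr (_ * _).
under eq_bigr do rewrite subr0 Y_rademacher expr2 mulr_suml.
under eq_bigr do under eq_bigr do rewrite mulr_sumr.
rewrite exchange_big mulr_sumr; apply: eq_bigr => K _.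
rewrite exchange_big (bigD1 K) //= [X in _ + X]big1 => [|L LK]; last first.
  under eq_bigr do rewrite mulrACA.
  by rewrite -mulr_suml sum_sgnb_mul eq_sym (negbTE LK) !mul0r.
under eq_bigr do rewrite mulrACA; rewrite -mulr_suml sum_sgnb_mul eqxx mul1r.
by rewrite addr0 expr2.
Qed.

End rademacher_sums.

Lemma sum_sqr_le_mul (R : realDomainType) (I : finType) (c : I -> R) (a b : R) :
  0 <= a -> (forall K, `|c K| <= a) -> \sum_K `|c K| <= b ->
  \sum_K c K ^+ 2 <= a * b.
Proof.
move=> a0 ca cb; apply: le_trans (ler_wpM2l a0 cb); rewrite mulr_sumr.
by apply: ler_sum => K _; rewrite -real_normK ?num_real // expr2 ler_wpM2r.
Qed.

Unset Implicit Arguments. Set Strict Implicit.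

Theorem mainTheorem5 (R : realType) (p q : R) (hp : 1 < p) (hq : q = p / (p - 1))
  (h : nat -> nat -> nat -> R -> R)
  (hL : forall n k i, (0 < n)%N -> (k < n)%N -> (i < 2 ^ k)%N -> inL p (h n k i))
  (hlaw : forall n, (0 < n)%N -> same_joint_law n (h n))
  (hind : indep_levels h)
  (M N : nat) (hMN : (N < M)%N)
  (B : {set 'I_(2 ^ N)})
  (f : R -> R) (hf : inL q f)
  (hf0 : Rintegral (@lebesgue_measure R) unitI f = 0) :
  let Y := fun theta : {ffun {K : 'I_(2 ^ N) | K \in B} -> bool} =>
    Rintegral (@lebesgue_measure R) unitI
      (fun x => f x * \sum_(K : {K : 'I_(2 ^ N) | K \in B})
                         sgnb (theta K) * h M N (val K) x) in
  uexp Y = 0 /\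
  uvar Y <= Lnorm01 q f ^+ 2
            * fine ((@lebesgue_measure R) (\bigcup_(K in [set K | K \in B]) dyadic N K))
                `^ p^-1
            * 2 `^ (- (N%:R / p)).
Proof.
move=> Y; pose I : finType := {K : 'I_(2 ^ N) | K \in B}.
pose G (K : I) := h M N (val K).
have M_gt0 : (0 < M)%N := leq_ltn_trans (leq0n N) hMN.
have law := hlaw M M_gt0.
have mG K : measurable_fun unitI (G K) := (hL M N (val K) M_gt0 hMN (ltn_ord _)).1.
have val_neq (K L : I) : K != L -> val (val K) != val (val L).
  by apply: contra => /eqP/val_inj/val_inj ->.
have G_bounded K := copy_haar_bounded law hMN (ltn_ord _) (mG K).
have G_disjoint (K L : I) (KL : K != L) :=
  copy_haar_disjoint law hMN (ltn_ord _) (mG K) (ltn_ord _) (mG L) (val_neq K L KL).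
have G_support (K : I) := copy_haar_support law hMN (ltn_ord (val K)).
pose c K := Rintegral (@lebesgue_measure R) unitI (fun x => f x * G K x).
have Y_rademacher theta : Y theta = \sum_K sgnb (theta K) * c K.
  by rewrite /Y (Rintegral_mul_sum hp hq hf mG G_bounded G_disjoint G_support).
have normr_c := normr_Rintegral_mul_le hp hq hf mG G_bounded G_disjoint G_support.
have sum_normr_c := sum_normr_Rintegral_mul_le hp hq hf mG G_bounded G_disjoint G_support.
split; first exact: uexp_rademacher Y_rademacher.
rewrite (uvar_rademacher Y_rademacher).
apply: le_trans (sum_sqr_le_mul _ normr_c sum_normr_c) _; first by rewrite mulr_ge0 ?powR_ge0.
have cardI : #|I| = #|B| by rewrite card_sig; apply: eq_card => K; rewrite inE.
have pow2 : 2 `^ (- (N%:R / p)) = (2 ^+ N)^-1 `^ p^-1 :> R.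
  by rewrite -powR_mulrn ?ler0n // -powRN -powRrM mulNr.
rewrite lebesgue_measure_bigcup_dyadic /= cardI pow2 le_eqVlt; apply/orP; left.
by apply/eqP; ring.
Qed.
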